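(* Let $(X,d)$ be a metric space and $\ell:X\to[0,+\infty)$ lower semicontinuous with $\inf_X\ell=0$. For $\lambda>0$ let $u_\lambda$ be the Perron solution of $(\mathcal{G}_\lambda)$. Then for every $\alpha>0$, $u_\lambda\to u_\alpha$ pointwise as $\lambda\to\alpha^-$.
   Context: Global slope: $G[u](x)=\sup_{y\neq x}\frac{(u(x)-u(y))_+}{d(x,y)}$ if $u(x)<+\infty$, $G[u](x)=+\infty$ otherwise. A solution of $(\mathcal{G}_\lambda)$ is a lower semicontinuous $u$ with $\inf_Xu=0$ and $\lambda u+G[u]=\ell$ on $X$; the Perron solution is the solution that is pointwise maximal among all solutions (it exists for every $\lambda>0$). *)

From HB Require Import structures.
From mathcomp Require Import all_boot all_order all_algebra.
From mathcomp Require Import all_classical all_reals all_analysis.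
Set Implicit Arguments. Unset Strict Implicit. Unset Printing Implicit Defensive.
Import Order.TTheory GRing.Theory Num.Theory.
Local Open Scope classical_set_scope.
Local Open Scope ring_scope.

Definition is_metric {R : realType} {X : Type} (d : X -> X -> R) : Prop :=
  (forall x y, 0 <= d x y) /\
  (forall x y, d x y = 0 <-> x = y) /\
  (forall x y, d x y = d y x) /\
  (forall x y z, d x z <= d x y + d y z).

Definition lsc_metric {R : realType} {X : Type} (d : X -> X -> R)
  (f : X -> \bar R) : Prop :=
  forall x (a : \bar R), (a < f x)%E ->
    exists2 delta : R, 0 < delta & forall y, d x y < delta -> (a < f y)%E.

Definition global_slope {R : realType} {X : Type} (d : X -> X -> R)
  (u : X -> \bar R) (x : X) : \bar R :=
  if (u x < +oo)%E then
    ereal_sup [set (((d x y)^-1)%:E * maxe (u x - u y) 0)%E | y in [set y | y <> x]]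
  else +oo%E.

Definition is_solution {R : realType} {X : Type} (d : X -> X -> R)
  (l : X -> R) (lam : R) (u : X -> \bar R) : Prop :=
  lsc_metric d u /\
  ereal_inf (range u) = 0%E /\
  (forall x, (lam%:E * u x + global_slope d u x)%E = (l x)%:E).

Definition is_perron_solution {R : realType} {X : Type} (d : X -> X -> R)
  (l : X -> R) (lam : R) (u : X -> \bar R) : Prop :=
  is_solution d l lam u /\
  (forall v, is_solution d l lam v -> forall x, (v x <= u x)%E).

From HB Require Import structures.
From mathcomp Require Import all_boot all_order all_algebra.
From mathcomp Require Import all_classical all_reals all_analysis.
From mathcomp Require Import lra.
Import Order.TTheory GRing.Theory Num.Theory numFieldNormedType.Exports.
Local Open Scope classical_set_scope.
Local Open Scope ring_scope.

(* A subsolution of (G_lam) is a real function w >= 0 with lam w + G[w] <= l.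
   Every solution is one, and conversely the supremum of all subsolutions is a
   solution: were its slope at x0 strictly below l x0 - lam w x0, raising it by
   a small cone centred at x0, which the lower semicontinuity of l keeps
   admissible, would give a larger subsolution.  Hence u_lam is the largest
   subsolution.  A subsolution for mu is one for every lam <= mu, so lam |-> u_lam
   is nonincreasing and has a left limit L >= u_alpha at alpha; the subsolution
   inequalities are closed, so L is a subsolution for alpha and L <= u_alpha. *)

Section metric_global_slope.
Context {R : realType} {X : Type} {d : X -> X -> R}.
Hypothesis dm : is_metric d.

Lemma metric_ge0 x y : 0 <= d x y.
Proof. by case: dm. Qed.

Lemma metric_xx x : d x x = 0.
Proof. by case: dm => _ [/(_ x x) [_ ->]]. Qed.

Lemma metric_triangle x y z : d x z <= d x y + d y z.
Proof. by case: dm => _ [_ [_]]. Qed.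

Lemma metric_gt0 x y : y <> x -> 0 < d x y.
Proof.
case: dm => d0 [dxy _] yx; rewrite lt_neqAle d0 andbT.
by apply/eqP => /esym /dxy /esym.
Qed.

Lemma global_slope_EFin (w : X -> R) x :
  global_slope d (fun y => (w y)%:E) x =
  ereal_sup [set ((d x y)^-1 * Num.max (w x - w y) 0)%:E | y in [set y | y <> x]].
Proof.
rewrite /global_slope ltry; congr ereal_sup; apply/seteqP; split => _ [y yx <-];
  by exists y => //; rewrite -EFinB -EFin_max -EFinM.
Qed.

Lemma global_slope_EFin_leP (w : X -> R) x (c : R) : 0 <= c ->
  (global_slope d (fun y => (w y)%:E) x <= c%:E)%E <->
  (forall y, w x - w y <= c * d x y).
Proof.
move=> c0; rewrite global_slope_EFin; split => [slope_le y|w_le].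
  have [->|yx] := pselect (y = x); first by rewrite subrr metric_xx mulr0.
  have : (((d x y)^-1 * Num.max (w x - w y) 0)%:E <= c%:E)%E.
    by apply: le_trans slope_le; apply: ereal_sup_ubound; exists y.
  rewrite lee_fin ler_pdivrMl ?metric_gt0 // mulrC; apply: le_trans.
  by rewrite le_max lexx.
apply: ge_ereal_sup => _ [y yx <-]; rewrite lee_fin ler_pdivrMl ?metric_gt0 //.
by rewrite ge_max mulrC w_le mulr_ge0 ?metric_ge0.
Qed.

Lemma global_slope_EFin_ge0 (w : X -> R) x : (exists y, y <> x) ->
  (0 <= global_slope d (fun y => (w y)%:E) x)%E.
Proof.
move=> [y yx]; rewrite global_slope_EFin.
apply: (@le_trans _ _ ((d x y)^-1 * Num.max (w x - w y) 0)%:E).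
  by rewrite lee_fin mulr_ge0 ?invr_ge0 ?metric_ge0 // le_max lexx orbT.
by apply: ereal_sup_ubound; exists y.
Qed.

Lemma global_slope_EFin_isolated (w : X -> R) x : ~ (exists y, y <> x) ->
  global_slope d (fun y => (w y)%:E) x = -oo%E.
Proof.
move=> isol; rewrite global_slope_EFin; apply/ereal_sup_ninfty => z [y yx _].
by case: isol; exists y.
Qed.

End metric_global_slope.

(* The pointwise form of [lam w + G[w] <= l], see [global_slope_EFin_leP]. *)
Definition subsolution {R : realType} {X : Type} (d : X -> X -> R) (l : X -> R)
    (lam : R) (w : X -> R) : Prop :=
  [/\ forall x, 0 <= w x, forall x, lam * w x <= l x &
      forall x y, w x - w y <= (l x - lam * w x) * d x y].

Section subsolutions.
Context {R : realType} {X : Type} {d : X -> X -> R} {l : X -> R}.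
Hypothesis dm : is_metric d.
Local Notation subsolution := (subsolution d l).

Lemma subsolution0 lam : (forall x, 0 <= l x) -> subsolution lam (fun=> 0).
Proof.
move=> l0; split=> // [x|x y]; first by rewrite mulr0.
by rewrite mulr0 !subr0 mulr_ge0 ?metric_ge0.
Qed.

Lemma subsolutionW {lam mu w} : 0 <= lam <= mu ->
  subsolution mu w -> subsolution lam w.
Proof.
move=> /andP[lam0 lam_mu] [w0 wl wd].
have lamw x : lam * w x <= mu * w x by rewrite ler_wpM2r.
split=> // [x|x y]; first exact: le_trans (lamw x) (wl x).
apply: le_trans (wd x y) _; rewrite ler_wpM2r ?metric_ge0 //.
by rewrite lerD2l lerN2.
Qed.

Lemma subsolution_l_ge0 {lam w} x : 0 <= lam -> subsolution lam w -> 0 <= l x.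
Proof. by move=> lam0 [w0 wl _]; exact: le_trans (mulr_ge0 lam0 (w0 x)) (wl x). Qed.

Lemma subsolution_lsc lam w : 0 <= lam -> subsolution lam w ->
  lsc_metric d (fun x => (w x)%:E).
Proof.
move=> lam0 ws x [a| |] //= a_lt; last by exists 1 => // y _; rewrite ltNyr.
have [w0 wl wd] := ws; have l0 := subsolution_l_ge0 x lam0 ws.
rewrite lte_fin in a_lt.
exists ((w x - a) / (l x + 1)) => [|y]; first by rewrite divr_gt0 ?subr_gt0 //; lra.
rewrite ltr_pdivlMr ?lte_fin => [dxy|]; last lra.
have := wd x y; have := mulr_ge0 (mulr_ge0 lam0 (w0 x)) (metric_ge0 dm x y).
have := metric_ge0 dm x y; nra.
Qed.

Lemma subsolution_inf0 lam w : 0 < lam ->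
  ereal_inf (range (fun x => (l x)%:E)) = 0%E -> subsolution lam w ->
  ereal_inf (range (fun x => (w x)%:E)) = 0%E.
Proof.
move=> lam0 linf [w0 wl _]; apply/le_anti/andP; split; last first.
  by apply: le_ereal_inf_tmp => _ [x _ <-]; rewrite lee_fin.
apply/lee_addgt0Pr => e e0; rewrite add0e.
have /ereal_inf_lt[_ [x _ <-]] : (ereal_inf (range (fun x => (l x)%:E)) < (lam * e)%:E)%E.
  by rewrite linf lte_fin mulr_gt0.
rewrite lte_fin => lx_lt; apply: ge_ereal_inf; exists (w x)%:E; first by exists x.
by rewrite lee_fin; have := wl x; nra.
Qed.

Lemma subsolution_slope lam w x : subsolution lam w ->
  (global_slope d (fun y => (w y)%:E) x <= (l x - lam * w x)%:E)%E.
Proof. by move=> [_ wl wd]; apply/(global_slope_EFin_leP dm); rewrite ?subr_ge0. Qed.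

Lemma subsolution_cvg {F : set_system R} {FF : ProperFilter F}
    (U : R -> X -> R) (V : X -> R) (alpha : R) :
  lam @[lam --> F] --> alpha -> (\forall lam \near F, subsolution lam (U lam)) ->
  (forall x, U lam x @[lam --> F] --> V x) -> subsolution alpha V.
Proof.
move=> lamF Usub UV.
split=> [x|x|x y].
- apply: (ler_cvg_to (cvg_cst 0) (UV x)).
  by apply: filterS Usub => lam [w0 _ _]; exact: w0.
- apply: (ler_cvg_to (cvgM lamF (UV x)) (cvg_cst (l x))).
  by apply: filterS Usub => lam [_ wl _]; exact: wl.
- apply: (ler_cvg_to (cvgB (UV x) (UV y))
    (cvgM (cvgB (cvg_cst (l x)) (cvgM lamF (UV x))) (cvg_cst (d x y)))).
  by apply: filterS Usub => lam [_ _ wd]; exact: wd.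
Qed.

Lemma subsolution_max {lam w} {phi : X -> R} {K : R} : 0 <= K ->
  subsolution lam w ->
  (forall x y, phi x - phi y <= K * d x y) ->
  (forall x, w x < phi x -> lam * phi x + K <= l x) ->
  subsolution lam (fun x => Num.max (w x) (phi x)).
Proof.
move=> K0 [w0 wl wd] phi_lip phi_l.
have ge_w y : w y <= Num.max (w y) (phi y) by rewrite le_max lexx.
have ge_phi y : phi y <= Num.max (w y) (phi y) by rewrite le_max lexx orbT.
split=> [x|x|x y]; first by rewrite le_max w0.
- by case: (ltP (w x) (phi x)) => [/(phi_l x)|_]; [lra | exact: wl].
case: (ltP (w x) (phi x)) (ge_w y) (ge_phi y) => [/(phi_l x) lphi|_] wy phiy.
- have : K * d x y <= (l x - lam * phi x) * d x y.
    by rewrite ler_wpM2r ?metric_ge0 //; lra.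
  have := phi_lip x y; lra.
- by have := wd x y; lra.
Qed.

Lemma subsolution_bump {lam w x0} {g : R} : 0 < lam ->
  lsc_metric d (fun x => (l x)%:E) -> subsolution lam w -> 0 <= g ->
  lam * w x0 + g < l x0 -> (forall y, w x0 - w y <= g * d x0 y) ->
  exists2 w', subsolution lam w' & w x0 < w' x0.
Proof.
move=> lam0 l_lsc ws g0 gap w_lip; pose del := l x0 - lam * w x0 - g.
have del0 : 0 < del by rewrite /del; lra.
have [r r0 l_near] : exists2 r : R, 0 < r &
    forall y, d x0 y < r -> ((l x0 - del / 4)%:E < (l y)%:E)%E.
  by apply: l_lsc; rewrite lte_fin; lra.
(* The cone has slope K, strictly between the slope g of w at x0 and the room
   l x0 - lam w x0; eps is so small that the cone exceeds w only inside the
   ball where l > l x0 - del / 4. *)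
pose K := g + del / 2; pose eps := Num.min (del / (4 * lam)) (r * del / 4).
have eps0 : 0 < eps by rewrite lt_min !divr_gt0 ?mulr_gt0.
have lam_eps : lam * eps <= del / 4.
  have : eps <= del / (4 * lam) by rewrite ge_min lexx.
  by rewrite ler_pdivlMr ?mulr_gt0 //; lra.
have eps_r : eps <= r * del / 4 by rewrite ge_min lexx orbT.
pose phi y := w x0 + eps - K * d x0 y.
have K0 : 0 <= K by rewrite /K; lra.
exists (fun y => Num.max (w y) (phi y)); last first.
  by rewrite /phi metric_xx // mulr0 subr0 lt_max ltrDl eps0 orbT.
apply: (subsolution_max K0 ws) => [x y|x wphi].
  have := ler_wpM2l K0 (metric_triangle dm x0 x y); rewrite /phi; lra.
have dx : d x0 x < r.
  have := w_lip x; have := metric_ge0 dm x0 x; rewrite /phi /K in wphi; nra.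
have := l_near x dx; rewrite lte_fin.
have := mulr_ge0 (ltW lam0) (mulr_ge0 K0 (metric_ge0 dm x0 x)).
have delE : del = l x0 - lam * w x0 - g by [].
rewrite /phi /K; lra.
Qed.

End subsolutions.

Definition subsolution_sup {R : realType} {X : Type} (d : X -> X -> R) (l : X -> R)
  (lam : R) (x : X) : R := sup [set w x | w in subsolution d l lam].

Section subsolution_sup.
Context {R : realType} {X : Type} {d : X -> X -> R} {l : X -> R} {lam : R}.
Hypotheses (dm : is_metric d) (l_ge0 : forall x, 0 <= l x) (lam_gt0 : 0 < lam).
Local Notation subsolution_sup := (subsolution_sup d l lam).

Let subsolution_vals_neq0 x : [set w x | w in subsolution d l lam] !=set0.
Proof. by exists 0, (fun=> 0) => //; apply: subsolution0. Qed.

Lemma subsolution_sup_ub {w} x : subsolution d l lam w -> w x <= subsolution_sup x.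
Proof.
move=> ws; apply: sup_upper_bound; last by exists w.
split; first exact: subsolution_vals_neq0.
exists (l x / lam) => _ [w' [_ wl _] <-].
by rewrite ler_pdivlMr // mulrC.
Qed.

Lemma subsolution_sup_subsolution : subsolution d l lam subsolution_sup.
Proof.
have S0 x : 0 <= subsolution_sup x.
  exact: (subsolution_sup_ub x (subsolution0 dm lam l_ge0)).
split=> // [x|x y].
  rewrite mulrC -ler_pdivlMr //; apply: ge_sup; first exact: subsolution_vals_neq0.
  by move=> _ [w [_ wl _] <-]; rewrite ler_pdivlMr // mulrC.
have pos : 0 < lam * d x y + 1.
  by have := mulr_ge0 (ltW lam_gt0) (metric_ge0 dm x y); lra.
suff : subsolution_sup x <= (l x * d x y + subsolution_sup y) / (lam * d x y + 1).
  by rewrite ler_pdivlMr //; lra.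
apply: ge_sup; first exact: subsolution_vals_neq0.
move=> _ [w ws <-]; rewrite ler_pdivlMr //.
have := subsolution_sup_ub y ws; have [_ _ wd] := ws; have := wd x y; lra.
Qed.

Lemma subsolution_sup_solution : lsc_metric d (fun x => (l x)%:E) ->
  ereal_inf (range (fun x => (l x)%:E)) = 0%E -> (forall x, exists y : X, y <> x) ->
  is_solution d l lam (fun x => (subsolution_sup x)%:E).
Proof.
move=> l_lsc linf nonisolated; have Ss := subsolution_sup_subsolution.
split; first exact: subsolution_lsc (ltW lam_gt0) Ss.
split; first exact: subsolution_inf0 lam_gt0 linf Ss.
move=> x; suff -> : global_slope d (fun y => (subsolution_sup y)%:E) x =
    (l x - lam * subsolution_sup x)%:E by rewrite -EFinM -EFinD addrC subrK.
apply/le_anti/andP; split; first exact: subsolution_slope.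
rewrite leNgt; apply/negP.
have := global_slope_EFin_ge0 dm subsolution_sup x (nonisolated x).
case E : global_slope => [g| |] //; rewrite lee_fin lte_fin => g0 g_lt.
have S_lip y : subsolution_sup x - subsolution_sup y <= g * d x y.
  by move: y; apply/(global_slope_EFin_leP dm _ _ _ g0); rewrite E.
have gap : lam * subsolution_sup x + g < l x by lra.
have [w ws Sw] := subsolution_bump dm lam_gt0 l_lsc Ss g0 gap S_lip.
by have := subsolution_sup_ub x ws; lra.
Qed.

End subsolution_sup.

Section solutions.
Context {R : realType} {X : Type} {d : X -> X -> R} {l : X -> R} {lam : R}
  {v : X -> \bar R}.
Hypotheses (lam_gt0 : 0 < lam) (v_sol : is_solution d l lam v).

Lemma solution_ge0 x : (0 <= v x)%E.
Proof. by have [_ [<- _]] := v_sol; apply: ereal_inf_lbound; exists x. Qed.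

Lemma solution_EFin x : v x = (fine (v x))%:E.
Proof.
have [_ [_ /(_ x)]] := v_sol; move: (solution_ge0 x); rewrite /global_slope.
by case: (v x) => [r| |] //= _; rewrite gt0_muley ?lte_fin.
Qed.

Lemma solution_slope x : global_slope d v x = (l x - lam * fine (v x))%:E.
Proof.
have [_ [_ /(_ x)]] := v_sol; rewrite [X in (_ * X)%E]solution_EFin.
case: (global_slope d v x) => [g| |] //=.
by rewrite -EFinM -EFinD => -[<-]; congr (_%:E); lra.
Qed.

Lemma solution_nonisolated x : exists y : X, y <> x.
Proof.
apply: contrapT => isolated; move: (solution_slope x).
by rewrite (funext solution_EFin) global_slope_EFin_isolated.
Qed.

Lemma solution_subsolution : is_metric d -> subsolution d l lam (fun y => fine (v y)).
Proof.
move=> dm; have slope x : global_slope d (fun y => (fine (v y))%:E) x =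
    (l x - lam * fine (v x))%:E by rewrite -(funext solution_EFin) solution_slope.
have lv x : lam * fine (v x) <= l x.
  have := global_slope_EFin_ge0 dm (fun y => fine (v y)) x (solution_nonisolated x).
  by rewrite slope lee_fin subr_ge0.
split=> // [x|x y]; first by rewrite -lee_fin -solution_EFin solution_ge0.
by move: y; apply/(global_slope_EFin_leP dm); rewrite ?subr_ge0 ?slope.
Qed.

End solutions.

Lemma nonincreasing_at_left_is_cvgr {R : realType} (f : R -> R) (a : R) :
  (\forall x \near a^'-, {in `]x, a[ &, nonincreasing_fun f}) ->
  (\forall x \near a^'-, has_lbound [set f y | y in `]x, a[]) ->
  cvg (f x @[x --> a^'-]).
Proof.
move=> nif lbf; rewrite -is_cvgNE; apply: nondecreasing_at_left_is_cvgr.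
- by apply: filterS nif => x nif y z yx zx yz; rewrite lerN2 nif.
- apply: filterS lbf => x [M lbM]; exists (- M) => _ [y yx <-].
  by rewrite lerN2 lbM //; exists y.
Qed.


Section perron_solution.
Context {R : realType} {X : Type} {d : X -> X -> R} {l : X -> R}.
Hypotheses (dm : is_metric d) (l_ge0 : forall x, 0 <= l x)
  (l_lsc : lsc_metric d (fun x => (l x)%:E))
  (l_inf0 : ereal_inf (range (fun x => (l x)%:E)) = 0%E).

Lemma perron_solution_ge_subsolution {lam u w} x : 0 < lam ->
  is_perron_solution d l lam u -> subsolution d l lam w -> w x <= fine (u x).
Proof.
move=> lam0 [u_sol u_max] ws; rewrite -lee_fin -(solution_EFin lam0 u_sol).
have S_sol := subsolution_sup_solution dm l_ge0 lam0 l_lsc l_inf0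
  (solution_nonisolated lam0 u_sol).
by apply: le_trans (u_max _ S_sol x); rewrite lee_fin (subsolution_sup_ub dm l_ge0 lam0).
Qed.

Lemma perron_solution_antitone {lam mu u_lam u_mu} x : 0 < lam -> lam <= mu ->
  is_perron_solution d l lam u_lam -> is_perron_solution d l mu u_mu ->
  fine (u_mu x) <= fine (u_lam x).
Proof.
move=> lam0 lam_mu u_lam_perron [u_mu_sol _].
apply: (perron_solution_ge_subsolution (w := fun y => fine (u_mu y)) x lam0 u_lam_perron).
apply: (subsolutionW dm _ (solution_subsolution (lt_le_trans lam0 lam_mu) u_mu_sol dm)).
by rewrite ltW.
Qed.

Section perron_family.
Variable u : R -> X -> \bar R.
Hypothesis u_perron : forall lam, 0 < lam -> is_perron_solution d l lam (u lam).

Lemma perron_family_is_cvg_left alpha y : 0 < alpha ->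
  cvg (fine (u lam y) @[lam --> alpha^'-]).
Proof.
move=> alpha0; apply: nonincreasing_at_left_is_cvgr; near=> a.
  move=> s t; rewrite !in_itv /= => /andP[a_s _] _ st.
  have s0 : 0 < s by apply: lt_trans a_s; near: a; exact: nbhs_left_gt.
  exact: perron_solution_antitone y s0 st (u_perron _ s0) (u_perron _ (lt_le_trans s0 st)).
exists 0 => z [s]; rewrite /= in_itv /= => /andP[a_s _] <-.
have s0 : 0 < s by apply: lt_trans a_s; near: a; exact: nbhs_left_gt.
by have [] := solution_subsolution s0 (u_perron _ s0).1 dm.
Unshelve. all: by end_near.
Qed.

Lemma perron_family_cvg_left alpha y : 0 < alpha ->
  fine (u lam y) @[lam --> alpha^'-] --> fine (u alpha y).
Proof.
move=> alpha0; have U_cvg z := perron_family_is_cvg_left alpha z alpha0.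
pose L z := lim (fine (u lam z) @[lam --> alpha^'-]).
have L_sub : subsolution d l alpha L.
  apply: (subsolution_cvg (F := alpha^'-) (fun lam z => fine (u lam z))) => //.
  - exact: cvg_at_left_filter cvg_id.
  - near=> lam; have lam0 : 0 < lam by near: lam; exact: nbhs_left_gt.
    exact: solution_subsolution lam0 (u_perron _ lam0).1 dm.
suff <- : L y = fine (u alpha y) by exact: U_cvg.
apply/le_anti/andP; split.
  exact: perron_solution_ge_subsolution y alpha0 (u_perron _ alpha0) L_sub.
apply: limr_ge (U_cvg y) _; near=> lam.
have lam0 : 0 < lam by near: lam; exact: nbhs_left_gt.
have lam_alpha : lam <= alpha by apply/ltW; near: lam; exact: nbhs_left_lt.
exact: perron_solution_antitone y lam0 lam_alpha (u_perron _ lam0) (u_perron _ alpha0).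
Unshelve. all: by end_near.
Qed.

End perron_family.

End perron_solution.

Theorem proposition5p8 (R : realType) (X : Type) (d : X -> X -> R)
  (l : X -> R) (u : R -> X -> \bar R) :
  is_metric d ->
  (forall x, 0 <= l x) ->
  lsc_metric d (fun x => (l x)%:E) ->
  ereal_inf (range (fun x => (l x)%:E)) = 0%E ->
  (forall lam, 0 < lam -> is_perron_solution d l lam (u lam)) ->
  forall alpha, 0 < alpha -> forall x,
    (fun lam => u lam x) @ alpha^'- --> u alpha x.
Proof.
move=> dm l_ge0 l_lsc l_inf0 u_perron alpha alpha0 x.
have u_EFin lam : 0 < lam -> u lam x = (fine (u lam x))%:E.
  by move=> lam0; exact: solution_EFin lam0 (u_perron lam lam0).1 x.
rewrite u_EFin //; apply: cvg_EFin.
  by near=> lam; rewrite u_EFin //; near: lam; exact: nbhs_left_gt.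
exact: (perron_family_cvg_left dm l_ge0 l_lsc l_inf0 _ u_perron alpha x alpha0).
Unshelve. all: by end_near.
Qed.
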